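(* For all $\Gamma\subseteq Form$ and $\varphi\in Form$: $\Gamma\vdash_{\mathbf K^p}\varphi$ implies $\Gamma\models_{\mathcal C_{P-}}\varphi$; $\Gamma\vdash_{\mathbf T^p}\varphi$ implies $\Gamma\models_{\mathcal C_{re}}\varphi$; and for each $\clubsuit\in\{\mathbf B^p,\mathbf V,\mathbf{KB4}^p,\mathbf I,\mathbf O,\mathbf C\}$, $\Gamma\vdash_\clubsuit\varphi$ implies $\Gamma\models_{\mathcal C_\clubsuit}\varphi$.
   Context: Fix a countable set $P0$ of propositional variables; $Form$: $\varphi::=p\mid\bot\mid(\varphi\wedge\varphi)\mid(\varphi\to\varphi)$ ($\wedge$ left-associative, binds tighter than $\to$). A model is $\mathfrak M=(W,R,V)$ with $W\neq\emptyset$, $R\subseteq W\times W$, $V:P0\to\wp(W)$; pointed model $(\mathfrak M,s)$, $s\in W$. Satisfaction: $\bot$ never true; $p$ true at $s$ iff $s\in V(p)$; $\wedge$ pointwise; $\mathfrak M,s\models\varphi\to\psi$ iff for all $t$ with $sRt$, $\mathfrak M,t\models\varphi$ implies $\mathfrak M,t\models\psi$. For $X\subseteq W$: $-X=W\setminus X$, $R[X]=\{t:\exists s\in X,\ sRt\}$, $R^\Box(X)=\{s:\forall t\,(sRt\Rightarrow t\in X)\}$. A proposition of $(W,R)$ is $X\subseteq W$ with $R[X]\cap R^\Box(R[X])\subseteq X$; an interpretation is a model with every $V(p)$ a proposition. Classes of models: $\mathcal D_{\mathbf K^p}$ all interpretations; $\mathcal D_{\mathbf T^p}$ reflexive interpretations;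 $\mathcal D_{\mathbf B^p}$ symmetric; $\mathcal D_{\mathbf V}$ transitive; $\mathcal D_{\mathbf{KB4}^p}$ symmetric and transitive; $\mathcal D_{\mathbf I}$ reflexive and transitive; $\mathcal D_{\mathbf O}$ reflexive and symmetric; $\mathcal D_{\mathbf C}$ reflexive, symmetric and transitive interpretations; $\mathcal D_{P-}$ the models with $V(p)\subseteq R^\Box(-R^\Box(\emptyset)\cup V(p))$ for all $p$; $\mathcal D_{re}$ all reflexive models. $\mathcal C_\clubsuit=\{(\mathfrak M,s):\mathfrak M\in\mathcal D_\clubsuit,\ s\in\mathfrak M\}$. $\Gamma\models_{\mathcal C}\varphi$ iff for every $(\mathfrak M,s)\in\mathcal C$, if $\mathfrak M,s$ satisfies all of $\Gamma$ then $\mathfrak M,s\models\varphi$. Sequents are pairs $(\Gamma,\varphi)$, $\Gamma\subseteq Form$ arbitrary; $Sqt$ the set of them. For $\vdash\subseteq Sqt$, $\Gamma\vdash\varphi$ means $(\Gamma,\varphi)\in\vdash$, $\psi\vdash\varphi$ means $\{\psi\}\vdash\varphi$, $\vdash\varphi$ means $\emptyset\vdash\varphi$. Rules (for all $\Gamma,\Delta\subseteq Form$, $p\in P0$, formulas): (A) $\Gamma\cup\{\varphi\}\vdash\varphi$; (Mon) $\Gamma\subseteq\Delta$, $\Gamma\vdash\varphi\Rightarrow\Delta\vdash\varphi$; (Cut) $\Gamma\cup\{\psi\}\vdash\varphi$, $\Delta\vdash\psi\Rightarrow\Gamma\cup\Delta\vdash\varphi$; ($\bot$) $\bot\vdash\varphi$;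 ($\wedge$I) $\{\varphi,\psi\}\vdash\varphi\wedge\psi$; ($\wedge$E) $\varphi\wedge\psi\vdash\varphi$, $\varphi\wedge\psi\vdash\psi$; ($\to$0) $\vdash\varphi\to\varphi$; ($\to$1) $\Gamma\vdash\varphi\Rightarrow\{\psi\to\chi:\chi\in\Gamma\}\vdash\psi\to\varphi$; ($\to$2) $\{\varphi\to\psi,\psi\to\chi\}\vdash\varphi\to\chi$; (Refl) $\{\varphi,\varphi\to\psi\}\vdash\psi$; (Tran) $\varphi\to\psi\vdash(\bot\to\bot)\to(\varphi\to\psi)$; (Sym1) $\Gamma\cup\{\psi\}\vdash\chi$ and $\Gamma\cup\{(\varphi\to\psi)\to\bot\}\vdash\chi\Rightarrow\Gamma\cup\{\varphi\}\vdash\chi$; (Sym2) $\{\alpha\wedge\psi\to\chi,\alpha\wedge((\varphi\to\psi)\to\bot)\to\chi\}\vdash\alpha\wedge\varphi\to\chi$; (Prop$^-$) $p\vdash((\bot\to\bot)\to\bot)\to p$; (Prop$_{tr}$) $p\vdash(\bot\to\bot)\to p$; (Prop$_{sy}$) $p\vdash((p\to\bot)\to\bot)\to p$. Let BASE = (A),(Mon),(Cut),($\bot$),($\wedge$I),($\wedge$E),($\to$0),($\to$1),($\to$2). Each $\vdash_\clubsuit$ is the smallest relation $\subseteq Sqt$ satisfying BASE plus: $\mathbf K^p$: (Prop$^-$); $\mathbf T^p$: (Refl),(Prop$^-$); $\mathbf B^p$: (Sym1),(Sym2),(Prop$_{sy}$); $\mathbf V$: (Tran),(Prop$_{tr}$);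 $\mathbf{KB4}^p$: (Tran),(Sym1),(Sym2),(Prop$_{tr}$); $\mathbf I$: (Refl),(Tran),(Prop$_{tr}$); $\mathbf O$: (Refl),(Sym1),(Sym2),(Prop$_{sy}$); $\mathbf C$: (Refl),(Tran),(Sym1),(Sym2),(Prop$_{tr}$). *)

Inductive Form : Type :=
| Var : nat -> Form
| Bot : Form
| And : Form -> Form -> Form
| Imp : Form -> Form -> Form.

Definition FSet := Form -> Prop.
Definition sing (a : Form) : FSet := fun x => x = a.
Definition pair (a b : Form) : FSet := fun x => x = a \/ x = b.
Definition addF (G : FSet) (a : Form) : FSet := fun x => G x \/ x = a.
Definition unionF (G D : FSet) : FSet := fun x => G x \/ D x.
Definition subF (G D : FSet) : Prop := forall x, G x -> D x.
Definition emptyF : FSet := fun _ => False.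
Definition impImage (psi : Form) (G : FSet) : FSet :=
  fun x => exists chi, G chi /\ x = Imp psi chi.

Definition Top : Form := Imp Bot Bot.

Record Model : Type := {
  W : Type;
  W_ne : inhabited W;
  Rel : W -> W -> Prop;
  Val : nat -> W -> Prop
}.

Fixpoint sat (M : Model) (s : W M) (f : Form) : Prop :=
  match f with
  | Var p => Val M p s
  | Bot => False
  | And a b => sat M s a /\ sat M s b
  | Imp a b => forall t, Rel M s t -> sat M t a -> sat M t b
  end.

Definition img {T : Type} (R : T -> T -> Prop) (X : T -> Prop) : T -> Prop :=
  fun t => exists s, X s /\ R s t.
Definition boxR {T : Type} (R : T -> T -> Prop) (X : T -> Prop) : T -> Prop :=
  fun s => forall t, R s t -> X t.

Definition isProposition {T : Type} (R : T -> T -> Prop) (X : T -> Prop) : Prop :=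
  forall x, img R X x -> boxR R (img R X) x -> X x.

Definition interpretation (M : Model) : Prop :=
  forall p, isProposition (Rel M) (Val M p).

Definition reflexiveM (M : Model) : Prop := forall s, Rel M s s.
Definition symmetricM (M : Model) : Prop := forall s t, Rel M s t -> Rel M t s.
Definition transitiveM (M : Model) : Prop :=
  forall s t u, Rel M s t -> Rel M t u -> Rel M s u.

Definition D_Kp (M : Model) := interpretation M.
Definition D_Tp (M : Model) := interpretation M /\ reflexiveM M.
Definition D_Bp (M : Model) := interpretation M /\ symmetricM M.
Definition D_V (M : Model) := interpretation M /\ transitiveM M.
Definition D_KB4p (M : Model) := interpretation M /\ symmetricM M /\ transitiveM M.
Definition D_I (M : Model) := interpretation M /\ reflexiveM M /\ transitiveM M.
Definition D_O (M : Model) := interpretation M /\ reflexiveM M /\ symmetricM M.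
Definition D_C (M : Model) :=
  interpretation M /\ reflexiveM M /\ symmetricM M /\ transitiveM M.
Definition D_Pminus (M : Model) : Prop :=
  forall p s, Val M p s ->
    boxR (Rel M) (fun t => ~ boxR (Rel M) (fun _ => False) t \/ Val M p t) s.
Definition D_re (M : Model) : Prop := reflexiveM M.

(* Gamma |=_C phi, where C = {(M,s) : M in D, s in M} *)
Definition conseq (D : Model -> Prop) (G : FSet) (phi : Form) : Prop :=
  forall (M : Model) (s : W M), D M ->
    (forall psi, G psi -> sat M s psi) -> sat M s phi.

Inductive logic : Type := Kp | Tp | Bp | Vl | KB4p | Il | Ol | Cl.

Definition hasRefl (L : logic) : Prop :=
  match L with Tp | Il | Ol | Cl => True | _ => False end.
Definition hasTran (L : logic) : Prop :=
  match L with Vl | KB4p | Il | Cl => True | _ => False end.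
Definition hasSym (L : logic) : Prop :=
  match L with Bp | KB4p | Ol | Cl => True | _ => False end.
Definition hasPropMinus (L : logic) : Prop :=
  match L with Kp | Tp => True | _ => False end.
Definition hasPropTr (L : logic) : Prop :=
  match L with Vl | KB4p | Il | Cl => True | _ => False end.
Definition hasPropSy (L : logic) : Prop :=
  match L with Bp | Ol => True | _ => False end.

Inductive Der (L : logic) : FSet -> Form -> Prop :=
| R_A : forall G phi, Der L (addF G phi) phi
| R_Mon : forall G D phi, subF G D -> Der L G phi -> Der L D phi
| R_Cut : forall G D psi phi,
    Der L (addF G psi) phi -> Der L D psi -> Der L (unionF G D) phi
| R_Bot : forall phi, Der L (sing Bot) phi
| R_AndI : forall phi psi, Der L (pair phi psi) (And phi psi)
| R_AndE1 : forall phi psi, Der L (sing (And phi psi)) phi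
| R_AndE2 : forall phi psi, Der L (sing (And phi psi)) psi
| R_Imp0 : forall phi, Der L emptyF (Imp phi phi)
| R_Imp1 : forall G phi psi, Der L G phi -> Der L (impImage psi G) (Imp psi phi)
| R_Imp2 : forall phi psi chi,
    Der L (pair (Imp phi psi) (Imp psi chi)) (Imp phi chi)
| R_Refl : hasRefl L -> forall phi psi,
    Der L (pair phi (Imp phi psi)) psi
| R_Tran : hasTran L -> forall phi psi,
    Der L (sing (Imp phi psi)) (Imp Top (Imp phi psi))
| R_Sym1 : hasSym L -> forall G phi psi chi,
    Der L (addF G psi) chi -> Der L (addF G (Imp (Imp phi psi) Bot)) chi ->
    Der L (addF G phi) chi
| R_Sym2 : hasSym L -> forall alpha phi psi chi,
    Der L (pair (Imp (And alpha psi) chi)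
                (Imp (And alpha (Imp (Imp phi psi) Bot)) chi))
          (Imp (And alpha phi) chi)
| R_PropMinus : hasPropMinus L -> forall p,
    Der L (sing (Var p)) (Imp (Imp Top Bot) (Var p))
| R_PropTr : hasPropTr L -> forall p,
    Der L (sing (Var p)) (Imp Top (Var p))
| R_PropSy : hasPropSy L -> forall p,
    Der L (sing (Var p)) (Imp (Imp (Imp (Var p) Bot) Bot) (Var p)).

(* We prove
   once and for all (lemma [sound]) that [Der L] is sound for a class of
   models [D] as soon as each extra rule of [L] is semantically valid on [D]:
   reflexivity validates (Refl), transitivity validates (Tran), symmetry
   validates (Sym1) and (Sym2), and the proposition rules hold pointwise. *)

From Stdlib Require Import Classical.

Lemma refl_modus_ponens (M : Model) (s : W M) (phi psi : Form) :
  reflexiveM M -> sat M s phi -> sat M s (Imp phi psi) -> sat M s psi.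
Proof. intros Hrefl Hphi Himp. exact (Himp s (Hrefl s) Hphi). Qed.

Lemma tran_persistent_imp (M : Model) (s : W M) (phi psi : Form) :
  transitiveM M -> sat M s (Imp phi psi) -> sat M s (Imp Top (Imp phi psi)).
Proof.
  intros Htran Himp t Hst _ u Htu Hu.
  exact (Himp u (Htran _ _ _ Hst Htu) Hu).
Qed.

(* On symmetric models, if phi holds and psi fails at s, then phi -> psi fails
   at every successor of s (look back along the symmetric edge), i.e.
   (phi -> psi) -> Bot holds at s.  This is the semantic content of (Sym1/2). *)
Lemma sym_refutes_imp (M : Model) (s : W M) (phi psi : Form) :
  symmetricM M -> sat M s phi -> ~ sat M s psi ->
  sat M s (Imp (Imp phi psi) Bot).
Proof.
  intros Hsym Hphi Hpsi t Hst Himp.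
  exact (Hpsi (Himp s (Hsym _ _ Hst) Hphi)).
Qed.

(* (Prop_tr): on transitive interpretations, a true variable is true at every
   successor, because each successor lies in R[V(p)] and all its successors
   do too, so the proposition property puts it into V(p). *)
Lemma prop_tr_valid (M : Model) (p : nat) (s : W M) :
  interpretation M -> transitiveM M -> Val M p s -> sat M s (Imp Top (Var p)).
Proof.
  intros Hint Htran Hs t Hst _. apply Hint.
  - exists s; auto.
  - intros u Htu. exists s; split; [exact Hs | exact (Htran _ _ _ Hst Htu)].
Qed.

(* (Prop_sy): on symmetric interpretations, let t be a successor of a p-world
   where ~~p holds.  Then t is in R[V(p)], and so is every successor u of t:
   otherwise, by symmetry, u has no p-successor, i.e. u satisfies ~p,
   contradicting ~~p at t.  The proposition property then gives p at t. *)
Lemma prop_sy_valid (M : Model) (p : nat) (s : W M) :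
  interpretation M -> symmetricM M -> Val M p s ->
  sat M s (Imp (Imp (Imp (Var p) Bot) Bot) (Var p)).
Proof.
  intros Hint Hsym Hs t Hst Hnn. apply Hint.
  - exists s; auto.
  - intros u Htu. apply NNPP. intros Hout.
    apply (Hnn u Htu). intros v Huv Hv. apply Hout.
    exists v; split; [exact Hv | exact (Hsym _ _ Huv)].
Qed.

(* (Prop^-) on reflexive models: no world satisfies Top -> Bot. *)
Lemma prop_minus_valid_re (M : Model) (p : nat) (s : W M) :
  reflexiveM M -> Val M p s -> sat M s (Imp (Imp Top Bot) (Var p)).
Proof.
  intros Hrefl _ t _ Hdead. exfalso. exact (Hdead t (Hrefl t) (fun _ _ H => H)).
Qed.

(* (Prop^-) on D_{P-}: a successor where Top -> Bot holds is a dead end,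
   so the defining condition of D_{P-} forces p there. *)
Lemma prop_minus_valid_pm (M : Model) (p : nat) (s : W M) :
  D_Pminus M -> Val M p s -> sat M s (Imp (Imp Top Bot) (Var p)).
Proof.
  intros Hpm Hs t Hst Hdead.
  destruct (Hpm p s Hs t Hst) as [Hlive | Hp]; [exfalso | exact Hp].
  apply Hlive. intros u Htu. exact (Hdead u Htu (fun _ _ H => H)).
Qed.

Section Soundness.

Variable L : logic.
Variable D : Model -> Prop.

Hypothesis refl_ok : hasRefl L -> forall M, D M -> reflexiveM M.
Hypothesis tran_ok : hasTran L -> forall M, D M -> transitiveM M.
Hypothesis sym_ok : hasSym L -> forall M, D M -> symmetricM M.
Hypothesis prop_minus_ok : hasPropMinus L -> forall M, D M -> forall p s,
  Val M p s -> sat M s (Imp (Imp Top Bot) (Var p)).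
Hypothesis prop_tr_ok : hasPropTr L -> forall M, D M -> forall p s,
  Val M p s -> sat M s (Imp Top (Var p)).
Hypothesis prop_sy_ok : hasPropSy L -> forall M, D M -> forall p s,
  Val M p s -> sat M s (Imp (Imp (Imp (Var p) Bot) Bot) (Var p)).

Lemma sound (G : FSet) (phi : Form) : Der L G phi -> conseq D G phi.
Proof.
  induction 1; intros M s HD HG; simpl in *.
  - apply HG; right; reflexivity.
  - apply IHDer; auto.
  - apply IHDer1; auto. intros x [Hx | ->].
    + apply HG; left; exact Hx.
    + apply IHDer2; auto. intros y Hy; apply HG; right; exact Hy.
  - destruct (HG Bot eq_refl).
  - split; apply HG; unfold pair; auto.
  - exact (proj1 (HG _ eq_refl)).
  - exact (proj2 (HG _ eq_refl)).
  - auto.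
  - intros t Hst Ht. apply IHDer; auto.
    intros chi Hchi. exact (HG (Imp psi chi) (ex_intro _ chi (conj Hchi eq_refl)) t Hst Ht).
  - intros t Hst Ht.
    apply (HG (Imp psi chi) (or_intror eq_refl) t Hst).
    exact (HG (Imp phi psi) (or_introl eq_refl) t Hst Ht).
  - apply (refl_modus_ponens M s phi psi (refl_ok ltac:(assumption) M HD));
      apply HG; unfold pair; auto.
  - exact (tran_persistent_imp M s phi psi (tran_ok ltac:(assumption) M HD) (HG _ eq_refl)).
  - destruct (classic (sat M s psi)) as [Hpsi | Hpsi].
    + apply IHDer1; auto. intros x [Hx | ->]; [apply HG; left; exact Hx | exact Hpsi].
    + apply IHDer2; auto. intros x [Hx | ->]; [apply HG; left; exact Hx |].
      apply (sym_refutes_imp M s phi psi (sym_ok ltac:(assumption) M HD)); auto.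
      apply HG; right; reflexivity.
  - intros t Hst [Halpha Hphi].
    destruct (classic (sat M t psi)) as [Hpsi | Hpsi].
    + exact (HG _ (or_introl eq_refl) t Hst (conj Halpha Hpsi)).
    + apply (HG _ (or_intror eq_refl) t Hst). split; [exact Halpha |].
      exact (sym_refutes_imp M t phi psi (sym_ok ltac:(assumption) M HD) Hphi Hpsi).
  - exact (prop_minus_ok ltac:(assumption) M HD p s (HG _ eq_refl)).
  - exact (prop_tr_ok ltac:(assumption) M HD p s (HG _ eq_refl)).
  - exact (prop_sy_ok ltac:(assumption) M HD p s (HG _ eq_refl)).
Qed.

End Soundness.

Theorem mainTheorem5 : forall (G : FSet) (phi : Form),
  (Der Kp G phi -> conseq D_Pminus G phi) /\
  (Der Tp G phi -> conseq D_re G phi) /\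
  (Der Bp G phi -> conseq D_Bp G phi) /\
  (Der Vl G phi -> conseq D_V G phi) /\
  (Der KB4p G phi -> conseq D_KB4p G phi) /\
  (Der Il G phi -> conseq D_I G phi) /\
  (Der Ol G phi -> conseq D_O G phi) /\
  (Der Cl G phi -> conseq D_C G phi).
Proof.
  intros G phi.
  unfold D_Bp, D_V, D_KB4p, D_I, D_O, D_C, D_re.
  (* For each calculus, the rules it lacks are vacuous ([contradiction]) and
     the ones it has follow from the frame conditions via the lemmas above. *)
  repeat split; apply sound; simpl; try contradiction; intros _ M HD;
    try tauto; intros p s Hs;
    solve [ apply prop_minus_valid_pm; auto
          | apply prop_minus_valid_re; auto
          | apply prop_tr_valid; tauto
          | apply prop_sy_valid; tauto ].
Qed.
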